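(* Let $X$ be a real Banach space, $I=\{1,\ldots,m\}$, $J=\{1,\ldots,l\}$, $f_i,g_j\colon X\to\mathbb{R}$, $M=\{x\in X\mid f_i(x)=0\ \forall i\in I,\ g_j(x)\le0\ \forall j\in J\}$, $\overline{x}\in M$, $J(\overline{x})=\{j\in J\mid g_j(\overline{x})=0\}$, and let $f_i$, $i\in I$, and $g_j$, $j\in J(\overline{x})$, be quasidifferentiable at $\overline{x}$ with given quasidifferentials. Consider the conditions $$[\mathscr{D} f_i(\overline{x})]^+\cap\operatorname{cl}^*\operatorname{lin}\{[\mathscr{D} f_k(\overline{x})]^+\mid k\ne i\}=\emptyset\quad\forall i\in I,\qquad(\mathrm{A})$$ $$\operatorname{co}\{[\mathscr{D} g_j(\overline{x})]^+\mid j\in J(\overline{x})\}\cap\operatorname{cl}^*\operatorname{lin}\{[\mathscr{D} f_i(\overline{x})]^+\mid i\in I\}=\emptyset.\qquad(\mathrm{B})$$ Call ''condition (Q) for given $x_i^*,y_i^*,z_j^*$'' the conjunction of: (1) for any $i\in I$ there exists $v_i\in X$ with $s(\underline{\partial} f_i(\overline{x})+y_i^*,v_i)<0$ and, for all $k\ne i$, $s(\underline{\partial} f_k(\overline{x})+y_k^*,v_i)\le0$ and $s(-x_k^*-\overline{\partial} f_k(\overline{x}),v_i)\le0$; (2) for any $i\in I$ there exists $w_i\in X$ with $s(-x_i^*-\overline{\partial} f_i(\overline{x}),w_i)<0$ and, for all $k\ne i$, $s(-x_k^*-\overline{\partial} f_k(\overline{x}),w_i)\le0$ and $s(\underline{\partial}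 f_k(\overline{x})+y_k^*,w_i)\le0$; (3) there exists $v_0\in X$ with $s(\underline{\partial} g_j(\overline{x})+z_j^*,v_0)<0$ for all $j\in J(\overline{x})$ and $s(\underline{\partial} f_i(\overline{x})+y_i^*,v_0)\le0$, $s(-x_i^*-\overline{\partial} f_i(\overline{x}),v_0)\le0$ for all $i\in I$. Then: (a) if (A) and (B) hold, then condition (Q) holds for all $x_i^*\in\underline{\partial} f_i(\overline{x})$, $y_i^*\in\overline{\partial} f_i(\overline{x})$, $i\in I$, and $z_j^*\in\overline{\partial} g_j(\overline{x})$, $j\in J(\overline{x})$. (b) If the linear spans appearing in (A) and (B) are weak$^*$ closed (in particular, if $X$ is finite dimensional), then conversely, validity of (Q) for all such $x_i^*,y_i^*,z_j^*$ implies (A) and (B). (c) If the span in (A) is weak$^*$ closed for every $i\in I$, then (A) and (B) hold if and only if the Mangasarian–Fromovitz constraint qualification in terms of quasidifferentials holds at $\overline{x}$, i.e. the sets $[\mathscr{D} f_i(\overline{x})]^+$, $i\in I$, are strongly linearly independent and there exists $v_0\in X$ such that $\langle x^*,v_0\rangle=0$ for all $x^*\in[\mathscr{D} f_i(\overline{x})]^+$, $i\in I$, and $\langle x^*,v_0\rangle<0$ for all $x^*\in[\mathscr{D} g_j(\overline{x})]^+$, $j\in J(\overline{x})$.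
   Context: $X^*$ is the dual with pairing $\langle\cdot,\cdot\rangle$; $\operatorname{cl}^*$ is weak$^*$ closure. $f$ is quasidifferentiable at $x$ if the directional derivative $f'(x,v)=\lim_{\alpha\to+0}(f(x+\alpha v)-f(x))/\alpha$ exists finitely for all $v$ and there is a pair $\mathscr{D} f(x)=[\underline{\partial} f(x),\overline{\partial} f(x)]$ of convex weak$^*$ compact subsets of $X^*$ with $f'(x,v)=\max_{x^*\in\underline{\partial} f(x)}\langle x^*,v\rangle+\min_{y^*\in\overline{\partial} f(x)}\langle y^*,v\rangle$ for all $v$; a specific such pair is fixed for each function. The quasidifferential sum is $[\mathscr{D} f(x)]^+=\underline{\partial} f(x)+\overline{\partial} f(x)$ (Minkowski sum). $s(C,v)=\sup_{x^*\in C}\langle x^*,v\rangle$. $\operatorname{lin}$ denotes linear span and $\operatorname{co}$ convex hull of the union of the listed sets. Sets $A_1,\ldots,A_m$ in a real vector space are strongly linearly independent if $A_i\cap\operatorname{lin}\{A_k\mid k\ne i\}=\emptyset$ for all $i$. *)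

From HB Require Import structures.
From mathcomp Require Import all_boot all_order all_algebra.
From mathcomp Require Import all_classical all_reals all_analysis.
Set Implicit Arguments. Unset Strict Implicit. Unset Printing Implicit Defensive.
Import Order.TTheory GRing.Theory Num.Theory.
Import numFieldNormedType.Exports.
Local Open Scope classical_set_scope.
Local Open Scope ring_scope.

Section QD.
Variables (R : realType) (X : normedModType R).

(* Elements of the dual X^* are represented as functions X -> R that are
   linear and continuous; <x^*, v> is just application x^* v. *)
Definition in_dual (p : X -> R) : Prop :=
  (forall (a : R) (u v : X), p (a *: u + v) = a * p u + p v) /\ continuous p.

(* The weak^* topology on X^* is the subspace topology induced by the
   topology of pointwise convergence {ptws X -> R}. *)
Definition wstar_compact (C : set (X -> R)) : Prop :=
  @compact {ptws X -> R} C.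

Definition wstar_closure (S : set (X -> R)) : set (X -> R) :=
  @closure {ptws X -> R} S `&` in_dual.

Definition convex_set_fun (C : set (X -> R)) : Prop :=
  forall p q, C p -> C q -> forall t : R, 0 <= t <= 1 ->
    C (fun v => t * p v + (1 - t) * q v).

Definition msum (A B : set (X -> R)) : set (X -> R) :=
  [set p | exists a, exists b, [/\ A a, B b & p = (fun v => a v + b v)]].

Definition mtrans (A : set (X -> R)) (y : X -> R) : set (X -> R) :=
  [set p | exists2 a, A a & p = (fun v => a v + y v)].

Definition mneg_trans (x : X -> R) (B : set (X -> R)) : set (X -> R) :=
  [set p | exists2 b, B b & p = (fun v => - x v - b v)].

Definition lin (S : set (X -> R)) : set (X -> R) :=
  [set p | exists n : nat, exists c : 'I_n -> R, exists e : 'I_n -> (X -> R),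
     (forall k, S (e k)) /\ p = (fun v => \sum_(k < n) c k * e k v)].

Definition co (S : set (X -> R)) : set (X -> R) :=
  [set p | exists n : nat, exists c : 'I_n -> R, exists e : 'I_n -> (X -> R),
     [/\ forall k, S (e k), forall k, 0 <= c k, \sum_(k < n) c k = 1
       & p = (fun v => \sum_(k < n) c k * e k v)]].

Definition supp (C : set (X -> R)) (v : X) : \bar R :=
  ereal_sup [set (p v)%:E | p in C].

Definition is_max_at (C : set (X -> R)) (v : X) (r : R) : Prop :=
  (exists2 p, C p & p v = r) /\ (forall p, C p -> p v <= r).
Definition is_min_at (C : set (X -> R)) (v : X) (r : R) : Prop :=
  (exists2 p, C p & p v = r) /\ (forall p, C p -> r <= p v).

Definition dir_deriv (f : X -> R) (x v : X) (d : R) : Prop :=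
  (fun a : R => (f (x + a *: v) - f x) / a) @ 0^'+ --> d.

Definition is_quasidiff (f : X -> R) (x : X) (Dl Du : set (X -> R)) : Prop :=
  [/\ Dl `<=` in_dual /\ Du `<=` in_dual,
      convex_set_fun Dl /\ convex_set_fun Du,
      wstar_compact Dl /\ wstar_compact Du &
      forall v, exists d, dir_deriv f x v d /\
        exists a b, [/\ is_max_at Dl v a, is_min_at Du v b & d = a + b]].

Definition strongly_lin_indep (m : nat) (A : 'I_m -> set (X -> R)) : Prop :=
  forall i, A i `&` lin (\bigcup_(k in [set k | k != i]) A k) = set0.

End QD.

Section Prop2.
Variables (R : realType) (X : normedModType R) (m l : nat).
Variables (Dlf Duf : 'I_m -> set (X -> R)) (Dlg Dug : 'I_l -> set (X -> R)).
Variable (Jact : set 'I_l).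

Definition qsum_f (i : 'I_m) := msum (Dlf i) (Duf i).
Definition qsum_g (j : 'I_l) := msum (Dlg j) (Dug j).

Definition span_A (i : 'I_m) : set (X -> R) :=
  lin (\bigcup_(k in [set k | k != i]) qsum_f k).
Definition span_B : set (X -> R) := lin (\bigcup_(i in setT) qsum_f i).

Definition condA : Prop :=
  forall i, qsum_f i `&` wstar_closure (span_A i) = set0.
Definition condB : Prop :=
  co (\bigcup_(j in Jact) qsum_g j) `&` wstar_closure span_B = set0.

Definition condQ (xs ys : 'I_m -> (X -> R)) (zs : 'I_l -> (X -> R)) : Prop :=
  [/\ (forall i, exists v : X,
         (supp (mtrans (Dlf i) (ys i)) v < 0)%E /\
         forall k, k != i ->
           (supp (mtrans (Dlf k) (ys k)) v <= 0)%E /\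
           (supp (mneg_trans (xs k) (Duf k)) v <= 0)%E),
      (forall i, exists w : X,
         (supp (mneg_trans (xs i) (Duf i)) w < 0)%E /\
         forall k, k != i ->
           (supp (mneg_trans (xs k) (Duf k)) w <= 0)%E /\
           (supp (mtrans (Dlf k) (ys k)) w <= 0)%E) &
      (exists v0 : X,
         (forall j, Jact j -> (supp (mtrans (Dlg j) (zs j)) v0 < 0)%E) /\
         (forall i, (supp (mtrans (Dlf i) (ys i)) v0 <= 0)%E /\
                    (supp (mneg_trans (xs i) (Duf i)) v0 <= 0)%E))].

Definition condQ_all : Prop :=
  forall (xs ys : 'I_m -> (X -> R)) (zs : 'I_l -> (X -> R)),
    (forall i, Dlf i (xs i)) -> (forall i, Duf i (ys i)) ->
    (forall j, Jact j -> Dug j (zs j)) -> condQ xs ys zs.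

Definition MFCQ_qd : Prop :=
  strongly_lin_indep qsum_f /\
  exists v0 : X,
    (forall i p, qsum_f i p -> p v0 = 0) /\
    (forall j p, Jact j -> qsum_g j p -> p v0 < 0).

End Prop2.

(* Weak^* continuous functionals on X^* are evaluations at points of X, so a
   weak^* compact convex set K of functionals that misses the weak^* closure of
   a subspace L is strictly separated from L by a vector v: k v <= -1 on K and
   q v = 0 on L.  (Finitely many y in the annihilator of L with |k y| > 1 cover
   K; the point of K nearest to 0 in the coordinates k |-> (k y)_y gives v.)
   (a) Apply this to K = Dl f_i + y_i^* or x_i^* + Du f_i, which lie in
   [D f_i]^+, against the span in (A), and to the convex hull of the sets
   Dl g_j + z_j^* against the span in (B); each resulting v is a vector of (Q),
   because every [D f_k]^+ occurring in the span vanishes at v.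
   (b) Conversely, write a point of the intersection as sum_t c_t (a_t + b_t)
   with a_t in Dl f_(k_t), b_t in Du f_(k_t), and take x_k^*, y_k^* to be the
   averages of the a_t, b_t with k_t = k: the sign conditions of (Q) at its
   vector force every a_t + b_t to vanish there, contradicting the strict
   inequality of (Q).
   (c) Under closedness of the spans, (A) is strong linear independence; the
   separating vector for (B) is the MFCQ direction, and conversely the MFCQ
   direction vanishes on the closed span in (B) but is negative on the hull. *)

From Pilot Require Import Defs.
From HB Require Import structures.
From mathcomp Require Import all_boot all_order all_algebra.
From mathcomp Require Import all_classical all_reals all_analysis.
From mathcomp Require Import ring lra.
Set Implicit Arguments. Unset Strict Implicit. Unset Printing Implicit Defensive.
Import Order.TTheory GRing.Theory Num.Theory.
Import numFieldNormedType.Exports.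
Local Open Scope classical_set_scope.
Local Open Scope ring_scope.

(* MathComp-Analysis also defines a [msum] (sums of measures). *)
Local Notation msum := Defs.msum.

Section FiniteAnnihilator.
Variable R : realType.

Lemma big_nat_extend_last n (lam : nat -> R) (a : R) (F : nat -> R) :
  \sum_(0 <= j < n.+1) (if j == n then a else lam j) * F j =
  \sum_(0 <= j < n) lam j * F j + a * F n.
Proof.
rewrite big_nat_recr //= eqxx; congr (_ + _).
by apply: eq_big_nat => j /andP [_ jn]; rewrite ltn_eqF.
Qed.

(* [w0 = 0] when every [w] in [W] vanishes at [n]; the identity then holds
   because [x / 0 = 0]. *)
Lemma subspace_pivot (W : set (nat -> R)) n : W (fun _ => 0) ->
  exists2 w0, W w0 & forall w, W w -> w n = w n / w0 n * w0 n.
Proof.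
move=> W0; have [[w0 Ww0 w0n]|none] := pselect (exists2 w0, W w0 & w0 n != 0).
  by exists w0 => // w _; rewrite divfK.
exists (fun _ => 0) => // w Ww; rewrite mulr0.
by apply: contrapT => wn; apply: none; exists w => //; apply/eqP.
Qed.

Lemma subspace_annihilator (n : nat) (W : set (nat -> R)) (t : nat -> R) :
  W (fun _ => 0) ->
  (forall a w1 w2, W w1 -> W w2 -> W (fun j => a * w1 j + w2 j)) ->
  ~ (exists2 w, W w & forall j, (j < n)%N -> w j = t j) ->
  exists lam : nat -> R,
    (forall w, W w -> \sum_(0 <= j < n) lam j * w j = 0) /\
    \sum_(0 <= j < n) lam j * t j != 0.
Proof.
elim: n W t => [|n IH] W t W0 Wc Ht.
  by exfalso; apply: Ht; exists (fun _ => 0).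
have [w0 Ww0 piv] := subspace_pivot n W0.
pose c := t n / w0 n.
pose t' j := t j - c * w0 j.
have [t'n|t'n] := eqVneq (t' n) 0; last first.
  have w0n : w0 n = 0.
    by apply/eqP; apply: contraNT t'n => w0n; rewrite /t' /c divfK // subrr eqxx.
  have coord_n F : \sum_(0 <= j < n.+1) (if j == n then 1 else 0) * F j = F n.
    rewrite big_nat_recr //= eqxx mul1r big_nat_cond big1 ?add0r // => j.
    by rewrite andbT => /andP [_ jn]; rewrite ltn_eqF // mul0r.
  exists (fun j => if j == n then 1 else 0); split => [w Ww|]; rewrite coord_n.
    by rewrite (piv w) // w0n mulr0.
  by move: t'n; rewrite /t' w0n mulr0 subr0.
pose W' := [set w | W w /\ w n = 0].
have Ht' : ~ (exists2 w, W' w & forall j, (j < n)%N -> w j = t' j).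
  move=> [w [Ww wn] Hw]; apply: Ht.
  exists (fun j => c * w0 j + w j); first exact: Wc.
  move=> j; rewrite ltnS leq_eqVlt => /orP [/eqP ->|jn].
    by move: t'n; rewrite wn /t'; lra.
  by rewrite Hw // /t'; ring.
have W'c a w1 w2 : W' w1 -> W' w2 -> W' (fun j => a * w1 j + w2 j).
  by move=> [Ww1 w1n] [Ww2 w2n]; split; [exact: Wc | rewrite w1n w2n; ring].
have [lam' [lamW' lamt']] := IH W' t' (conj W0 erefl) W'c Ht'.
pose S := \sum_(0 <= j < n) lam' j * w0 j.
have lam'_lin a F G : \sum_(0 <= j < n) lam' j * (a * F j + G j) =
    a * \sum_(0 <= j < n) lam' j * F j + \sum_(0 <= j < n) lam' j * G j.
  by rewrite mulr_sumr -big_split /=; apply: eq_bigr => j _; ring.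
exists (fun j => if j == n then - S / w0 n else lam' j); split.
  move=> w Ww; rewrite big_nat_extend_last.
  have W'w : W' (fun j => - (w n / w0 n) * w0 j + w j).
    by split; [exact: Wc | rewrite mulNr -piv // addNr].
  move: (lamW' _ W'w); rewrite lam'_lin -/S => /eqP; rewrite addrC addr_eq0 => /eqP ->.
  ring.
rewrite big_nat_extend_last; move: lamt'.
have -> : \sum_(0 <= j < n) lam' j * t' j = - c * S + \sum_(0 <= j < n) lam' j * t j.
  by rewrite -lam'_lin; apply: eq_bigr => j _; rewrite /t'; ring.
by rewrite /c; congr (_ != _); ring.
Qed.

End FiniteAnnihilator.

Section Functionals.
Variables (R : realType) (X : normedModType R).

Definition linear_fun (p : X -> R) :=
  forall (a : R) (u v : X), p (a *: u + v) = a * p u + p v.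

Definition lincomb_closed (L : set (X -> R)) :=
  forall a p q, L p -> L q -> L (fun v => a * p v + q v).

Lemma linear_fun0 (p : X -> R) : linear_fun p -> p 0 = 0.
Proof. by move=> H; have := H 1 0 0; rewrite scale1r addr0 mul1r; lra. Qed.

Lemma linear_funD (p : X -> R) u v : linear_fun p -> p (u + v) = p u + p v.
Proof. by move=> H; rewrite -[u]scale1r H mul1r scale1r. Qed.

Lemma linear_funZ (p : X -> R) a u : linear_fun p -> p (a *: u) = a * p u.
Proof. by move=> H; rewrite -[a *: u]addr0 H (linear_fun0 H) addr0. Qed.

Lemma linear_funN (p : X -> R) u : linear_fun p -> p (- u) = - p u.
Proof. by move=> H; rewrite -scaleN1r linear_funZ // mulN1r. Qed.

Lemma linear_fun_sum (p : X -> R) (I : Type) (r : seq I) (P : pred I) (F : I -> X) :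
  linear_fun p -> p (\sum_(i <- r | P i) F i) = \sum_(i <- r | P i) p (F i).
Proof. by move=> H; apply: (big_morph p (fun u v => linear_funD u v H) (linear_fun0 H)). Qed.

Lemma dual_linear (p : X -> R) : in_dual p -> linear_fun p.
Proof. by case. Qed.

Lemma dual_comb (a b : R) (p q : X -> R) : in_dual p -> in_dual q ->
  in_dual (fun v => a * p v + b * q v).
Proof.
move=> [Lp Cp] [Lq Cq]; split; first by move=> c u v /=; rewrite Lp Lq; ring.
move=> x; apply: (@cvgD _ _ _ _ _ (fun v => a * p v) (fun v => b * q v)).
  exact: (@cvgM _ _ _ _ (fun _ => a) p _ _ (cvg_cst _) (Cp x)).
exact: (@cvgM _ _ _ _ (fun _ => b) q _ _ (cvg_cst _) (Cq x)).
Qed.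

Lemma dual_add (p q : X -> R) : in_dual p -> in_dual q -> in_dual (fun v => p v + q v).
Proof.
move=> dp dq; have := dual_comb 1 1 dp dq.
by congr in_dual; apply: funext => v; rewrite !mul1r.
Qed.

Lemma lincomb_cat n1 n2 (c1 : 'I_n1 -> R) (e1 : 'I_n1 -> X -> R)
  (c2 : 'I_n2 -> R) (e2 : 'I_n2 -> X -> R) (a b : R) :
  exists (c : 'I_(n1 + n2) -> R) (e : 'I_(n1 + n2) -> X -> R),
  [/\ forall v, \sum_(k < n1 + n2) c k * e k v =
        a * \sum_(k < n1) c1 k * e1 k v + b * \sum_(k < n2) c2 k * e2 k v,
      \sum_(k < n1 + n2) c k = a * \sum_(k < n1) c1 k + b * \sum_(k < n2) c2 k,
      forall P : (X -> R) -> Prop, (forall k, P (e1 k)) -> (forall k, P (e2 k)) ->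
        forall k, P (e k) &
      0 <= a -> 0 <= b -> (forall k, 0 <= c1 k) -> (forall k, 0 <= c2 k) ->
        forall k, 0 <= c k].
Proof.
pose c k := match fintype.split k with inl k1 => a * c1 k1 | inr k2 => b * c2 k2 end.
pose e k := match fintype.split k with inl k1 => e1 k1 | inr k2 => e2 k2 end.
have sl i : fintype.split (lshift n2 i) = inl i := unsplitK (inl _ i).
have sr i : fintype.split (rshift n1 i) = inr i := unsplitK (inr _ i).
exists c, e; split.
- move=> v; rewrite big_split_ord /= !mulr_sumr.
  by congr (_ + _); apply: eq_bigr => k _; rewrite /c /e ?sl ?sr mulrA.
- rewrite big_split_ord /= !mulr_sumr.
  by congr (_ + _); apply: eq_bigr => k _; rewrite /c ?sl ?sr.
- by move=> P H1 H2 k; rewrite /e; case: (fintype.split k).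
- by move=> a0 b0 H1 H2 k; rewrite /c; case: (fintype.split k) => i; apply: mulr_ge0.
Qed.

Lemma lin0 (S : set (X -> R)) : lin S (fun _ => 0).
Proof.
exists 0%N, (fun _ => 0), (fun _ _ => 0); split; first by case.
by apply: funext => v; rewrite big_ord0.
Qed.

Lemma lin_sub (S : set (X -> R)) : S `<=` lin S.
Proof.
move=> p Sp; exists 1%N, (fun _ => 1), (fun _ => p); split => //.
by apply: funext => v; rewrite big_ord1 mul1r.
Qed.

Lemma lin_lincomb_closed (S : set (X -> R)) : lincomb_closed (lin S).
Proof.
move=> a p q [n1 [c1 [e1 [H1 ->]]]] [n2 [c2 [e2 [H2 ->]]]].
have [c [e [E1 _ E3 _]]] := lincomb_cat c1 e1 c2 e2 a 1.
exists (n1 + n2)%N, c, e; split; first exact: E3.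
by apply: funext => v; rewrite E1 mul1r.
Qed.

Lemma lin_linear (S : set (X -> R)) : S `<=` linear_fun -> lin S `<=` linear_fun.
Proof.
move=> HS p [n [c [e [He ->]]]] a u v.
rewrite mulr_sumr -big_split /=; apply: eq_bigr => k _.
by rewrite (HS _ (He k)); ring.
Qed.

Lemma lin_vanish (S : set (X -> R)) v :
  (forall p, S p -> p v = 0) -> forall q, lin S q -> q v = 0.
Proof.
move=> HS q [n [c [e [He ->]]]].
by apply: big1 => k _; rewrite HS ?mulr0.
Qed.

Lemma co_sub (S : set (X -> R)) : S `<=` co S.
Proof.
move=> p Sp; exists 1%N, (fun _ => 1), (fun _ => p); split => //.
  by rewrite big_ord1.
by apply: funext => v; rewrite big_ord1 mul1r.
Qed.

Lemma co_subset (S T : set (X -> R)) : S `<=` T -> co S `<=` co T.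
Proof. by move=> ST p [n [c [e [He c0 c1 ->]]]]; exists n, c, e; split => // k; apply: ST. Qed.

Lemma co_comb (S : set (X -> R)) p q t : co S p -> co S q -> 0 <= t <= 1 ->
  co S (fun v => t * p v + (1 - t) * q v).
Proof.
move=> [n1 [c1 [e1 [H1 P1 S1 ->]]]] [n2 [c2 [e2 [H2 P2 S2 ->]]]] /andP [t0 t1].
have [c [e [E1 E2 E3 E4]]] := lincomb_cat c1 e1 c2 e2 t (1 - t).
exists (n1 + n2)%N, c, e; split.
- exact: E3.
- by apply: E4; rewrite ?subr_ge0.
- by rewrite E2 S1 S2; ring.
- by apply: funext => v; rewrite E1.
Qed.

End Functionals.

Section WeakStarClosure.
Variables (R : realType) (X : normedModType R).
Variables (L : set (X -> R)) (k : X -> R).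
Hypotheses (L0 : L (fun _ => 0)) (Lc : lincomb_closed L) (Ll : L `<=` @linear_fun R X).
Hypothesis kl : linear_fun k.
Hypothesis ker_sub : forall y, (forall q, L q -> q y = 0) -> k y = 0.

Lemma lin_interpolate (s : seq X) : exists2 q, L q & {in s, q =1 k}.
Proof.
pose W := [set w : nat -> R | exists2 q, L q & w = fun j => q (nth 0 s j)].
have W0 : W (fun _ => 0) by exists (fun _ => 0).
have Wc a w1 w2 : W w1 -> W w2 -> W (fun j => a * w1 j + w2 j).
  move=> [q1 Lq1 ->] [q2 Lq2 ->].
  by exists (fun v => a * q1 v + q2 v) => //; exact: Lc.
have [[w [q Lq ->] Hw]|notW] :=
  pselect (exists2 w, W w & forall j, (j < size s)%N -> w j = k (nth 0 s j)).
  exists q => // x xs; have := Hw (index x s); rewrite (nth_index 0 xs).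
  by apply; rewrite index_mem.
have [lam [lamW lamk]] := subspace_annihilator W0 Wc notW.
pose y := \sum_(0 <= j < size s) lam j *: nth 0 s j.
have q_y q : L q -> q y = \sum_(0 <= j < size s) lam j * q (nth 0 s j).
  move=> Lq; rewrite linear_fun_sum; last exact: Ll.
  by apply: eq_bigr => j _; rewrite linear_funZ //; exact: Ll.
have Ly q : L q -> q y = 0.
  by move=> Lq; rewrite q_y //; exact: (lamW _ (ex_intro2 _ _ q Lq erefl)).
case/negP: lamk; apply/eqP; transitivity (k y); last exact: ker_sub Ly.
by rewrite /y linear_fun_sum //; apply: eq_bigr => j _; rewrite linear_funZ.
Qed.

Lemma mem_closure_of_ker : @closure {ptws X -> R} L k.
Proof.
rewrite closureEcvg.
pose D := [set i : seq X * R | 0 < i.2].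
pose B (i : seq X * R) := [set q : {ptws X -> R} | L q /\ forall x, x \in i.1 -> `|q x - k x| < i.2].
have FB : Filter (filter_from D B).
  apply: filter_from_filter; first by exists ([::], 1); rewrite /D /=.
  move=> i j Di Dj; exists (i.1 ++ j.1, Order.min i.2 j.2).
    by rewrite /D /= lt_min Di Dj.
  by move=> q [Lq Hq]; split; split => // x xi; have := Hq x;
    rewrite mem_cat xi ?orbT /= => /(_ isT); rewrite lt_min => /andP [].
have PB : ProperFilter (filter_from D B).
  apply: filter_from_proper => i Di.
  have [q Lq Hq] := lin_interpolate i.1.
  by exists q; split => // x xi; rewrite Hq // subrr normr0.
exists (filter_from D B) => //; split.
  apply/pointwise_cvgP => t; apply/cvgrPdist_lt => e e0.
  exists ([:: t], e) => // q [_ Hq] /=; rewrite distrC; apply: Hq.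
  by rewrite mem_seq1 eqxx.
by move=> P0 HP0; exists ([::], 1); [rewrite /D /= | move=> q [Lq _]; exact: HP0].
Qed.

End WeakStarClosure.

Section Separation.
Variables (R : realType) (X : normedModType R).
(* [compact_cover] is stated for pointed spaces. *)
HB.instance Definition _ := isPointed.Build {ptws X -> R} (fun _ => 0).

Lemma ptws_eval_continuous (t : X) : continuous (fun g : {ptws X -> R} => g t).
Proof.
move=> x; have /pointwise_cvgP : {ptws, nbhs x --> x} by apply: cvg_id.
by apply.
Qed.

Lemma ptws_sumsq_continuous (s : seq X) :
  continuous (fun p : {ptws X -> R} => \sum_(y <- s) p y * p y).
Proof.
elim: s => [|a s IH] x.
  rewrite (_ : (fun p : {ptws X -> R} => _) = fun _ => 0).
    exact: (@cvg_cst _ (0 : R) _ (nbhs x) (nbhs_filter x)).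
  by apply: funext => p; rewrite big_nil.
rewrite (_ : (fun p : {ptws X -> R} => _) =
    fun p => p a * p a + \sum_(y <- s) p y * p y); last first.
  by apply: funext => p; rewrite big_cons.
have ea := @ptws_eval_continuous a x.
exact: (@cvgD _ _ _ _ (nbhs_filter x) _ _ _ _
  (@cvgM _ _ _ (nbhs_filter x) _ _ _ _ ea ea) (IH x)).
Qed.

Lemma ge0_first_variation (a b : R) : 0 <= b ->
  (forall t, 0 < t <= 1 -> 0 <= 2 * a + t * b) -> 0 <= a.
Proof.
move=> b0 H; rewrite leNgt; apply/negP => a0.
have [ba|ba] := lerP b (- a); first by have := H 1; rewrite ltr01 lexx => /(_ isT); lra.
have t0 : 0 < - a / b by apply: divr_gt0; lra.
have t1 : - a / b <= 1 by rewrite ler_pdivrMr ?mul1r; lra.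
by have := H (- a / b); rewrite t0 t1 divfK ?gt_eqF //; [move=> /(_ isT); lra | lra].
Qed.

(* [k0] minimises [p |-> \sum_(y <- s) p y ^ 2] over [K]; the first-order
   condition along the segments [k0, k] of [K] gives [c := - k0]. *)
Lemma compact_convex_sep_seq (K : set (X -> R)) (s : seq X) :
  @compact {ptws X -> R} K -> convex_set_fun K ->
  (forall k, K k -> exists2 y, y \in s & 1 < `|k y|) ->
  exists c : X -> R, forall k, K k -> \sum_(y <- s) c y * k y <= -1.
Proof.
move=> cK vK Ks.
have [[k1 Kk1]|K0] := pselect (K !=set0); last first.
  by exists (fun _ => 0) => k Kk; case: K0; exists k.
pose phi (p : {ptws X -> R}) := \sum_(y <- s) p y * p y.
have [k0 /set_mem Kk0 k0min] := @compact_EVT_min {ptws X -> R} R phi K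
  (ex_intro _ k1 Kk1) cK (continuous_subspaceT (@ptws_sumsq_continuous s)).
have phi1 : 1 < phi k0.
  have [y ys ky] := Ks _ Kk0.
  rewrite /phi (big_rem y) //=.
  have : 0 <= \sum_(i <- rem y s) k0 i * k0 i by apply: sumr_ge0 => i _; rewrite -expr2 sqr_ge0.
  have : 1 < k0 y * k0 y by move: ky; rewrite ltr_normr => /orP [h|h]; nra.
  lra.
exists (fun y => - k0 y) => k Kk.
pose a := \sum_(y <- s) k0 y * (k y - k0 y).
pose b := \sum_(y <- s) (k y - k0 y) * (k y - k0 y).
have a0 : 0 <= a.
  apply: (@ge0_first_variation _ b); first by apply: sumr_ge0 => i _; rewrite -expr2 sqr_ge0.
  move=> t /andP [t0 t1].
  have Kt : K (fun v => t * k v + (1 - t) * k0 v) by apply: vK => //; rewrite t1 ltW.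
  have := k0min _ (mem_set Kt).
  have -> : phi (fun v => t * k v + (1 - t) * k0 v) = phi k0 + t * (2 * a + t * b).
    by rewrite /phi /a /b mulrDr !mulr_sumr -!big_split /=; apply: eq_bigr => y _; ring.
  by rewrite lerDl pmulr_rge0.
have -> : \sum_(y <- s) - k0 y * k y = - (a + phi k0).
  by rewrite /a /phi -big_split -sumrN; apply: eq_bigr => y _ /=; ring.
lra.
Qed.

Variables (K L : set (X -> R)).
Hypotheses (cK : @compact {ptws X -> R} K) (vK : convex_set_fun K).
Hypothesis lK : K `<=` @linear_fun R X.
Hypotheses (L0 : L (fun _ => 0)) (Lc : lincomb_closed L) (Ll : L `<=` @linear_fun R X).

Lemma notin_closure_witness k : K k -> ~ @closure {ptws X -> R} L k ->
  exists2 y, (forall q, L q -> q y = 0) & 1 < `|k y|.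
Proof.
move=> Kk nLk.
have [y0 Ly0 ky0] : exists2 y0, (forall q, L q -> q y0 = 0) & k y0 != 0.
  apply: contrapT => nk; apply: nLk; apply: mem_closure_of_ker => // [|y Ly].
    exact: lK.
  by apply: contrapT => /eqP ky; apply: nk; exists y.
exists ((2 / k y0) *: y0).
  by move=> q Lq; rewrite linear_funZ ?(Ly0 _ Lq) ?mulr0 //; exact: Ll.
by rewrite linear_funZ ?divfK ?ger0_norm //; [lra | exact: lK].
Qed.

Lemma wstar_separation : (forall k, K k -> ~ @closure {ptws X -> R} L k) ->
  exists v, (forall k, K k -> k v <= -1) /\ (forall q, L q -> q v = 0).
Proof.
move=> KL.
pose Y := [set y : X | forall q, L q -> q y = 0].
pose O y := [set p : {ptws X -> R} | 1 < `|p y|].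
have O_open y : Y y -> open (O y).
  move=> _; have -> : O y = (fun p : {ptws X -> R} => p y) @^-1`
      ([set r : R | 1 < r] `|` [set r : R | r < -1]).
    apply/seteqP; split => p; rewrite /O /preimage /=.
      by rewrite ltr_normr => /orP [h|h]; [left | right; lra].
    by case => h; rewrite ltr_normr; apply/orP; [left|right]; lra.
  apply: (proj1 (continuousP _) (@ptws_eval_continuous y)).
  by apply: openU; [exact: open_gt | exact: open_lt].
have [D DY KD] : finite_subset_cover Y O K.
  have ccK : @cover_compact {ptws X -> R} K by rewrite -(@compact_cover {ptws X -> R}).
  apply: ccK => // k Kk.
  by have [y Yy ky] := notin_closure_witness Kk (KL k Kk); exists y.
have [c Hc] : exists c : X -> R,
    forall k, K k -> \sum_(y <- finmap.enum_fset D) c y * k y <= -1.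
  exact: compact_convex_sep_seq.
exists (\sum_(y <- finmap.enum_fset D) c y *: y); split => [k Kk|q Lq].
  have lk := lK Kk.
  by rewrite linear_fun_sum //; under eq_bigr do rewrite linear_funZ //; exact: Hc.
rewrite linear_fun_sum; last exact: Ll.
apply: big1_seq => y /andP [_ yD]; rewrite linear_funZ; last exact: Ll.
by have /set_mem Yy := DY y yD; rewrite (Yy _ Lq) mulr0.
Qed.

End Separation.

Lemma fst_cvg (U V : topologicalType) (z : U * V) : (fun w : U * V => w.1) @ z --> z.1.
Proof. exact: cvg_fst. Qed.

Lemma snd_cvg (U V : topologicalType) (z : U * V) : (fun w : U * V => w.2) @ z --> z.2.
Proof. exact: cvg_snd. Qed.

Section WeakStarCompactness.
Variables (R : realType) (X : normedModType R).

Lemma ptws_continuous (T : topologicalType) (Phi : T -> {ptws X -> R}) :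
  (forall t x, (fun z => Phi z t) @ x --> Phi x t) -> continuous Phi.
Proof. by move=> H x; apply/pointwise_cvgP => t; exact: H. Qed.

Lemma ptws_eval_cvg (T : topologicalType) (h : T -> {ptws X -> R}) (x : T) (t : X) :
  h @ x --> h x -> (fun z => h z t) @ x --> h x t.
Proof. by move=> hc; apply: cvg_comp hc (@ptws_eval_continuous R X t (h x)). Qed.

Lemma ptws_closed_ker (v : X) : @closed {ptws X -> R} [set q | q v = 0].
Proof.
have := (proj1 (continuous_closedP _) (@ptws_eval_continuous R X v)) _ (@closed_eq R 0).
by congr closed.
Qed.

Lemma msum_compact (A B : set (X -> R)) :
  @compact {ptws X -> R} A -> @compact {ptws X -> R} B ->
  @compact {ptws X -> R} (msum A B).
Proof.
move=> cA cB.
pose sum (w : {ptws X -> R} * {ptws X -> R}) : {ptws X -> R} := fun v => w.1 v + w.2 v.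
have -> : msum A B = sum @` (A `*` B).
  apply/seteqP; split => p; first by move=> [a [b [Aa Bb ->]]]; exists (a, b).
  by move=> [[a b] [Aa Bb] <-]; exists a, b.
have ct : continuous sum.
  apply: ptws_continuous => t x.
  have h1 := ptws_eval_cvg (t := t) (@fst_cvg _ _ x).
  have h2 := ptws_eval_cvg (t := t) (@snd_cvg _ _ x).
  exact: (@cvgD _ _ _ _ (nbhs_filter x) _ _ _ _ h1 h2).
exact: continuous_compact (continuous_subspaceT ct) (compact_setX cA cB).
Qed.

Lemma msum_convex (A B : set (X -> R)) :
  convex_set_fun A -> convex_set_fun B -> convex_set_fun (msum A B).
Proof.
move=> vA vB p q [a [b [Aa Bb ->]]] [a' [b' [Aa' Bb' ->]]] t t01.
exists (fun v => t * a v + (1 - t) * a' v), (fun v => t * b v + (1 - t) * b' v).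
by split; [exact: vA | exact: vB | apply: funext => v; ring].
Qed.

Lemma msum_dual (A B : set (X -> R)) :
  A `<=` @in_dual R X -> B `<=` @in_dual R X -> msum A B `<=` @in_dual R X.
Proof. by move=> dA dB p [a [b [Aa Bb ->]]]; apply: dual_add; [exact: dA | exact: dB]. Qed.

Lemma mtrans_msum (A : set (X -> R)) (y : X -> R) : mtrans A y = msum A [set y].
Proof.
apply/seteqP; split => p; first by move=> [a Aa ->]; exists a, y.
by move=> [a [_ [Aa -> ->]]]; exists a.
Qed.

Lemma mtrans_compact (A : set (X -> R)) (y : X -> R) :
  @compact {ptws X -> R} A -> @compact {ptws X -> R} (mtrans A y).
Proof. by move=> cA; rewrite mtrans_msum; exact: (msum_compact cA (@compact_set1 {ptws X -> R} y)). Qed.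

Lemma mtrans_convex (A : set (X -> R)) (y : X -> R) :
  convex_set_fun A -> convex_set_fun (mtrans A y).
Proof.
move=> vA; rewrite mtrans_msum; apply: msum_convex => // p q -> -> t _.
by apply: funext => v /=; ring.
Qed.

Lemma mtrans_dual (A : set (X -> R)) (y : X -> R) :
  A `<=` @in_dual R X -> in_dual y -> mtrans A y `<=` @in_dual R X.
Proof. by move=> dA dy; rewrite mtrans_msum; apply: msum_dual => // p ->. Qed.

End WeakStarCompactness.

Section ConvexHull.
Variables (R : realType) (X : normedModType R).

Definition hull2 (A B : set (X -> R)) : set (X -> R) :=
  [set p | exists t a b, [/\ 0 <= t <= 1, A a, B b &
     p = fun v => t * a v + (1 - t) * b v]].

Lemma hull2_compact (A B : set (X -> R)) :
  @compact {ptws X -> R} A -> @compact {ptws X -> R} B ->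
  @compact {ptws X -> R} (hull2 A B).
Proof.
move=> cA cB.
pose mix (w : R * ({ptws X -> R} * {ptws X -> R})) : {ptws X -> R} :=
  fun v => w.1 * w.2.1 v + (1 - w.1) * w.2.2 v.
have -> : hull2 A B = mix @` (`[(0:R), 1] `*` (A `*` B)).
  apply/seteqP; split => p.
    move=> [t [a [b [t01 Aa Bb ->]]]]; exists (t, (a, b)); last by [].
    by split; [rewrite /= in_itv /= | split].
  move=> [[t [a b]] [t01 [Aa Bb]] <-].
  by exists t, a, b; split => //; move: t01; rewrite /= in_itv.
have ct : continuous mix.
  apply: ptws_continuous => t x.
  have hT := @fst_cvg _ _ x.
  have hA := ptws_eval_cvg (t := t) (cvg_comp _ _ (@snd_cvg _ _ x) (@fst_cvg _ _ x.2)).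
  have hB := ptws_eval_cvg (t := t) (cvg_comp _ _ (@snd_cvg _ _ x) (@snd_cvg _ _ x.2)).
  have h1 := @cvg_cst _ (1 : R) _ (nbhs x) (nbhs_filter x).
  have h1T := @cvgB _ _ _ _ (nbhs_filter x) _ _ _ _ h1 hT.
  have hM1 := @cvgM _ _ _ (nbhs_filter x) _ _ _ _ hT hA.
  have hM2 := @cvgM _ _ _ (nbhs_filter x) _ _ _ _ h1T hB.
  exact: (@cvgD _ _ _ _ (nbhs_filter x) _ _ _ _ hM1 hM2).
apply: continuous_compact (continuous_subspaceT ct) _.
exact: compact_setX (@segment_compact R 0 1) (compact_setX cA cB).
Qed.

(* The junk value [1] when [c1 + c2 = 0] keeps [mix_weightE] unconditional. *)
Definition mix_weight (c1 c2 : R) : R := if c1 + c2 != 0 then c1 / (c1 + c2) else 1.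

Lemma mix_weightE (c1 c2 x1 x2 : R) : 0 <= c1 -> 0 <= c2 ->
  (c1 + c2) * (mix_weight c1 c2 * x1 + (1 - mix_weight c1 c2) * x2) = c1 * x1 + c2 * x2.
Proof.
move=> c10 c20; rewrite /mix_weight; case: ifPn => [ne|]; first by field.
rewrite negbK => /eqP e.
have [-> ->] : c1 = 0 /\ c2 = 0 by split; lra.
by rewrite addr0 !mul0r addr0.
Qed.

Lemma mix_weight01 (c1 c2 : R) : 0 <= c1 -> 0 <= c2 -> 0 <= mix_weight c1 c2 <= 1.
Proof.
move=> c10 c20; rewrite /mix_weight; case: ifPn => [ne|]; last by rewrite ler01 lexx.
have c12 : 0 < c1 + c2 by rewrite lt_def ne /=; lra.
by rewrite divr_ge0 ?ler_pdivrMr //= ?mul1r; lra.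
Qed.

Lemma hull2_convex (A B : set (X -> R)) :
  convex_set_fun A -> convex_set_fun B -> convex_set_fun (hull2 A B).
Proof.
move=> vA vB p q [t [a [b [/andP [t0 t1] Aa Bb ->]]]]
  [s [a' [b' [/andP [s0 s1] Aa' Bb' ->]]]] l /andP [l0 l1].
pose c1 := l * t; pose c2 := (1 - l) * s.
pose d1 := l * (1 - t); pose d2 := (1 - l) * (1 - s).
have c10 : 0 <= c1 by apply: mulr_ge0.
have c20 : 0 <= c2 by apply: mulr_ge0; lra.
have d10 : 0 <= d1 by apply: mulr_ge0; lra.
have d20 : 0 <= d2 by apply: mulr_ge0; lra.
exists (c1 + c2), (fun v => mix_weight c1 c2 * a v + (1 - mix_weight c1 c2) * a' v),
  (fun v => mix_weight d1 d2 * b v + (1 - mix_weight d1 d2) * b' v); split.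
- by rewrite /c1 /c2; apply/andP; split; nra.
- by apply: vA => //; exact: mix_weight01.
- by apply: vB => //; exact: mix_weight01.
- apply: funext => v; have -> : 1 - (c1 + c2) = d1 + d2 by rewrite /c1 /c2 /d1 /d2; ring.
  by rewrite (mix_weightE _ _ c10 c20) (mix_weightE _ _ d10 d20) /c1 /c2 /d1 /d2; ring.
Qed.

Lemma hull2_dual (A B : set (X -> R)) :
  A `<=` @in_dual R X -> B `<=` @in_dual R X -> hull2 A B `<=` @in_dual R X.
Proof. by move=> dA dB p [t [a [b [_ Aa Bb ->]]]]; apply: dual_comb; [exact: dA | exact: dB]. Qed.

Lemma hull2_subl (A B : set (X -> R)) : B !=set0 -> A `<=` hull2 A B.
Proof.
move=> [b0 Bb0] p Ap; exists 1, p, b0; split => //; first by rewrite ler01 lexx.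
by apply: funext => v; rewrite subrr mul0r addr0 mul1r.
Qed.

Lemma hull2_subr (A B : set (X -> R)) : A !=set0 -> B `<=` hull2 A B.
Proof.
move=> [a0 Aa0] p Bp; exists 0, a0, p; split => //; first by rewrite lexx ler01.
by apply: funext => v; rewrite subr0 mul0r add0r mul1r.
Qed.

Lemma hull2_sub (A B U : set (X -> R)) :
  convex_set_fun U -> A `<=` U -> B `<=` U -> hull2 A B `<=` U.
Proof. by move=> Uc AU BU p [t [a [b [t01 Aa Bb ->]]]]; apply: Uc; [exact: AU | exact: BU |]. Qed.

Lemma compact_convex_cover_seq (I : eqType) (C : I -> set (X -> R)) (U : set (X -> R))
    (s : seq I) : convex_set_fun U -> s != [::] ->
  (forall j, j \in s -> [/\ @compact {ptws X -> R} (C j), convex_set_fun (C j),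
      C j `<=` @in_dual R X, C j !=set0 & C j `<=` U]) ->
  exists K : set (X -> R), [/\ @compact {ptws X -> R} K, convex_set_fun K,
      K `<=` @in_dual R X, K `<=` U & forall j, j \in s -> C j `<=` K].
Proof.
move=> Uc; elim: s => [//|j s IH] _ H.
have [cj vj dj nj uj] := H j (mem_head _ _).
case: s IH H => [|j' s] IH H.
  by exists (C j); split => // j0; rewrite mem_seq1 => /eqP ->.
have [K [cK vK dK uK sK]] : exists K : set (X -> R),
    [/\ @compact {ptws X -> R} K, convex_set_fun K,
      K `<=` @in_dual R X, K `<=` U & forall j0, j0 \in j' :: s -> C j0 `<=` K].
  by apply: IH => // j0 h; apply: H; rewrite in_cons h orbT.
have nK : K !=set0.
  have j's : j' \in j :: j' :: s by rewrite in_cons mem_head orbT.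
  have [_ _ _ [p Cp] _] := H j' j's.
  by exists p; apply: (sK j' (mem_head _ _)).
exists (hull2 (C j) K); split.
- exact: hull2_compact.
- exact: hull2_convex.
- exact: hull2_dual.
- exact: hull2_sub.
- move=> j0; rewrite in_cons => /orP [/eqP ->|h]; first exact: hull2_subl.
  exact: subset_trans (sK _ h) (hull2_subr nj).
Qed.

Lemma hull_separation (I : finType) (J : set I) (C : I -> set (X -> R))
    (L : set (X -> R)) :
  (forall j, J j -> [/\ @compact {ptws X -> R} (C j), convex_set_fun (C j),
      C j `<=` @in_dual R X & C j !=set0]) ->
  L (fun _ => 0) -> lincomb_closed L -> L `<=` @linear_fun R X ->
  co (\bigcup_(j in J) C j) `&` wstar_closure L = set0 ->
  exists v, (forall j p, J j -> C j p -> p v <= -1) /\ (forall q, L q -> q v = 0).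
Proof.
move=> HC L0 Lc Ll coL.
have [[j0 Jj0]|noJ] := pselect (exists j, J j); last first.
  exists 0; split => [j p Jj|q Lq]; first by case: noJ; exists j.
  exact: linear_fun0 (Ll _ Lq).
pose s := [seq j <- enum I | `[< J j >]].
have mem_s j : (j \in s) = `[< J j >] by rewrite mem_filter mem_enum andbT.
have s0 : s != [::].
  by apply/eqP => s_nil; have := mem_s j0; rewrite s_nil in_nil => /esym/asboolP.
pose U := co (\bigcup_(j in J) C j) `&` @in_dual R X.
have Uc : convex_set_fun U.
  move=> p q [cp dp] [cq dq] t t01; split; first exact: co_comb.
  exact: dual_comb.
have HCU j : j \in s -> [/\ @compact {ptws X -> R} (C j), convex_set_fun (C j),
    C j `<=` @in_dual R X, C j !=set0 & C j `<=` U].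
  rewrite mem_s => /asboolP Jj; have [cj vj dj nj] := HC j Jj; split => // p Cp.
  by split; [apply: co_sub; exists j | exact: dj].
have [K [cK vK dK KU CK]] := compact_convex_cover_seq Uc s0 HCU.
have KL k : K k -> ~ @closure {ptws X -> R} L k.
  by move=> Kk Lk; have [coK dk] := KU k Kk; rewrite -[False]/(set0 k) -coL.
have [v [Kv Lv]] := @wstar_separation R X K L cK vK
  (fun k Kk => dual_linear (dK k Kk)) L0 Lc Ll KL.
exists v; split => // j p Jj Cp; apply: Kv; apply: (CK j) => //.
by rewrite mem_s; apply/asboolP.
Qed.

End ConvexHull.

Section SupportAndAverages.
Variables (R : realType) (X : normedModType R).

Lemma le_supp (C : set (X -> R)) v p : C p -> ((p v)%:E <= supp C v)%E.
Proof. by move=> Cp; apply: ereal_sup_ubound; exists p. Qed.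

Lemma supp_le (C : set (X -> R)) v (r : R) :
  (forall p, C p -> p v <= r) -> (supp C v <= r%:E)%E.
Proof. by move=> H; apply: ge_ereal_sup => _ [p Cp <-]; rewrite lee_fin; exact: H. Qed.

Lemma supp_le0_pt (C : set (X -> R)) v p : (supp C v <= 0)%E -> C p -> p v <= 0.
Proof. by move=> H Cp; have := le_trans (le_supp v Cp) H; rewrite lee_fin. Qed.

Lemma supp_lt0_pt (C : set (X -> R)) v p : (supp C v < 0)%E -> C p -> p v < 0.
Proof. by move=> H Cp; have := le_lt_trans (le_supp v Cp) H; rewrite lte_fin. Qed.

Lemma convex_set_fun_sum (C : set (X -> R)) : convex_set_fun C ->
  forall n (w : 'I_n -> R) (g : 'I_n -> X -> R),
  (forall t, 0 <= w t) -> \sum_t w t = 1 -> (forall t, C (g t)) ->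
  C (fun v => \sum_t w t * g t v).
Proof.
move=> vC; elim => [|n IH] w g w0 w1 gC.
  by move: w1; rewrite big_ord0 => /eqP; rewrite eq_sym oner_eq0.
rewrite (_ : (fun v => \sum_(t < n.+1) w t * g t v) = fun v =>
  \sum_(t < n) w (widen_ord (leqnSn n) t) * g (widen_ord (leqnSn n) t) v
  + w ord_max * g ord_max v); last by apply: funext => v; rewrite big_ord_recr.
have wS := w1; rewrite big_ord_recr /= in wS.
set S := \sum_(i < n) w (widen_ord (leqnSn n) i) in wS.
have S0 : 0 <= S by apply: sumr_ge0 => i _.
have [Sz|Snz] := eqVneq S 0.
  have wz := psumr_eq0P (P := predT) (F := fun i => w (widen_ord (leqnSn n) i))
    (fun i _ => w0 _) Sz.
  have wm : w ord_max = 1 by lra.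
  rewrite (_ : (fun v => _) = g ord_max); first exact: gC.
  apply: funext => v; rewrite big1 ?add0r ?wm ?mul1r // => i _.
  by rewrite wz // mul0r.
have Sp : 0 < S by rewrite lt_def Snz.
pose w' := fun i : 'I_n => w (widen_ord (leqnSn n) i) / S.
have Cw : C (fun v => \sum_t w' t * g (widen_ord (leqnSn n) t) v).
  apply: IH => [t||t]; first by apply: divr_ge0.
    by rewrite /w' -mulr_suml divff.
  exact: gC.
have wm0 := w0 ord_max.
have S01 : 0 <= S <= 1 by apply/andP; split; lra.
have E : (fun v => \sum_(t < n) w (widen_ord (leqnSn n) t) *
      g (widen_ord (leqnSn n) t) v + w ord_max * g ord_max v) =
    (fun v => S * (\sum_t w' t * g (widen_ord (leqnSn n) t) v) +
      (1 - S) * g ord_max v).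
  apply: funext => v; have -> : 1 - S = w ord_max by lra.
  congr (_ + _); rewrite mulr_sumr; apply: eq_bigr => i _; rewrite /w'.
  by field.
rewrite E; exact: (vC _ _ Cw (gC ord_max) S S01).
Qed.

Lemma convex_weighted_avg (C : set (X -> R)) : convex_set_fun C ->
  forall n (c : 'I_n -> R) (P : pred 'I_n) (g : 'I_n -> X -> R),
  (forall t, 0 <= c t) -> 0 < \sum_(t | P t) c t ->
  (forall t, P t -> C (g t)) ->
  exists2 x, C x & forall v,
    (\sum_(t | P t) c t) * x v = \sum_(t | P t) c t * g t v.
Proof.
move=> vC n c P g c0 W0 gC.
set W := \sum_(t | P t) c t in W0 *.
have [t1 Pt1] : exists t1, P t1.
  apply: contrapT => H; move: W0; rewrite /W big_pred0 ?ltxx // => t.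
  by apply/negP => Pt; apply: H; exists t.
pose w := fun t => (P t)%:R * c t / W.
pose g' := fun t => if P t then g t else g t1.
have Cx : C (fun v => \sum_t w t * g' t v).
  apply: convex_set_fun_sum => //.
  - by move=> t; rewrite /w; apply: divr_ge0; [apply: mulr_ge0|apply: ltW].
  - rewrite /w -mulr_suml.
    have -> : \sum_t (P t)%:R * c t = W.
      by rewrite /W [RHS]big_mkcond /=; apply: eq_bigr => t _; case: (P t); rewrite ?mul1r ?mul0r.
    by rewrite divff // gt_eqF.
  - by move=> t; rewrite /g'; case: ifP => Pt; apply: gC.
exists (fun v => \sum_t w t * g' t v) => // v.
rewrite /= mulr_sumr [RHS]big_mkcond /=; apply: eq_bigr => t _.
rewrite /w /g'; case: (P t) => /=; last by rewrite !mul0r mulr0.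
by field; rewrite gt_eqF.
Qed.

Lemma convex_avg_rigid (C : set (X -> R)) : convex_set_fun C -> C !=set0 ->
  forall n (P : pred 'I_n) (g : 'I_n -> X -> R),
  (forall t, P t -> C (g t)) ->
  exists2 x, C x & forall v,
    ((forall t, P t -> g t v <= x v) -> forall t, P t -> g t v = x v) /\
    ((forall t, P t -> x v <= g t v) -> forall t, P t -> g t v = x v).
Proof.
move=> vC [x0 Cx0] n P g gC.
have [[t1 Pt1]|nP] := pselect (exists t, P t); last first.
  by exists x0 => // v; split => _ t Pt; exfalso; apply: nP; exists t.
have W0 : 0 < \sum_(t | P t) (1:R).
  rewrite (bigD1 t1) //=; apply: (@lt_le_trans _ _ 1) => //.
  by rewrite lerDl; apply: sumr_ge0.
have [x Cx Hx] := @convex_weighted_avg C vC n (fun _ => 1) P g (fun _ => ler01) W0 gC.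
exists x => // v.
have E : \sum_(t | P t) (x v - g t v) = 0.
  rewrite sumrB; have := Hx v; rewrite mulr_suml.
  under eq_bigr do rewrite mul1r.
  under [X in _ = X -> _]eq_bigr do rewrite mul1r.
  by move=> ->; rewrite subrr.
split => H t Pt.
  have nn : forall i, P i -> 0 <= x v - g i v.
    by move=> i Pi; rewrite subr_ge0; exact: H.
  by have := psumr_eq0P nn E Pt => /= h; lra.
have E' : \sum_(t | P t) (g t v - x v) = 0.
  by rewrite -[LHS]opprK -sumrN; under eq_bigr do rewrite opprB; rewrite E oppr0.
have nn : forall i, P i -> 0 <= g i v - x v.
  by move=> i Pi; rewrite subr_ge0; exact: H.
by have := psumr_eq0P nn E' Pt => /= h; lra.
Qed.

Lemma convex_comb_lt0 n (c f : 'I_n -> R) : (forall t, 0 <= c t) ->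
  \sum_t c t = 1 -> (forall t, f t < 0) -> \sum_t c t * f t < 0.
Proof.
move=> c0 c1 f0.
have [t0 ct0] : exists t0, 0 < c t0.
  apply: contrapT => H.
  have cz : forall t, c t = 0.
    move=> t; have := c0 t; rewrite le_eqVlt => /orP [/eqP <-//|h].
    by exfalso; apply: H; exists t.
  by move: c1; rewrite big1 // => /eqP; rewrite eq_sym oner_eq0.
rewrite (bigD1 t0) //=.
have h1 : c t0 * f t0 < 0 by rewrite pmulr_rlt0.
have h2 : \sum_(i | i != t0) c i * f i <= 0.
  by apply: sumr_le0 => i _; apply: mulr_ge0_le0 => //; apply: ltW.
lra.
Qed.

Lemma sum_regroup (I : finType) n (jj : 'I_n -> I) (c F : 'I_n -> R) (G : I -> R) :
  (forall j, \sum_(t | jj t == j) c t * F t = \sum_(t | jj t == j) c t * G j) ->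
  \sum_t c t * F t = \sum_t c t * G (jj t).
Proof.
move=> H.
rewrite (partition_big jj predT) //= [RHS](partition_big jj predT) //=.
apply: eq_bigr => j _; rewrite H; apply: eq_bigr => t /eqP -> //.
Qed.

(* [xs k] and [ys k] are averages of the [al t], resp. [be t], with [kk t = k];
   the sign conditions force each [al t] and [be t] to agree with them at [v]. *)
Lemma avg_representatives (m : nat) (Dl Du : 'I_m -> set (X -> R)) :
  (forall k, convex_set_fun (Dl k)) -> (forall k, convex_set_fun (Du k)) ->
  (forall k, Dl k !=set0) -> (forall k, Du k !=set0) ->
  forall n (kk : 'I_n -> 'I_m) (al be : 'I_n -> X -> R),
  (forall t, Dl (kk t) (al t)) -> (forall t, Du (kk t) (be t)) ->
  exists xs ys : 'I_m -> X -> R,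
  [/\ forall k, Dl k (xs k), forall k, Du k (ys k) &
    forall v, (forall t, (supp (mtrans (Dl (kk t)) (ys (kk t))) v <= 0)%E /\
                         (supp (mneg_trans (xs (kk t)) (Du (kk t))) v <= 0)%E) ->
    forall t, al t v + be t v = 0].
Proof.
move=> vl vu nl nu n kk al be Hal Hbe.
have /fin_all_exists [xs Hxs] k : exists x, Dl k x /\ forall v,
    ((forall t, kk t == k -> al t v <= x v) -> forall t, kk t == k -> al t v = x v).
  have Pk t : kk t == k -> Dl k (al t) by move=> /eqP <-.
  have [x Dx Hx] := convex_avg_rigid (vl k) (nl k) Pk.
  by exists x; split => // v; exact: (Hx v).1.
have /fin_all_exists [ys Hys] k : exists y, Du k y /\ forall v,
    ((forall t, kk t == k -> y v <= be t v) -> forall t, kk t == k -> be t v = y v).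
  have Pk t : kk t == k -> Du k (be t) by move=> /eqP <-.
  have [y Dy Hy] := convex_avg_rigid (vu k) (nu k) Pk.
  by exists y; split => // v; exact: (Hy v).2.
exists xs, ys; split => [k|k|v supp_le0 t0]; [exact: (Hxs k).1 | exact: (Hys k).1 |].
have sign t : (forall a, Dl (kk t) a -> a v + ys (kk t) v <= 0) /\
    (forall b, Du (kk t) b -> - xs (kk t) v - b v <= 0).
  have [h1 h2] := supp_le0 t.
  split => [a Da|b Db]; first exact: (supp_le0_pt h1 (ex_intro2 _ _ a Da erefl)).
  exact: (supp_le0_pt h2 (ex_intro2 _ _ b Db erefl)).
have e0 : xs (kk t0) v + ys (kk t0) v = 0.
  by have := (sign t0).1 _ (Hxs (kk t0)).1; have := (sign t0).2 _ (Hys (kk t0)).1; lra.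
have ea : al t0 v = xs (kk t0) v.
  apply: ((Hxs (kk t0)).2 v) => // t /eqP kt.
  by have := (sign t).1 _ (Hal t); rewrite kt; lra.
have eb : be t0 v = ys (kk t0) v.
  apply: ((Hys (kk t0)).2 v) => // t /eqP kt.
  by have := (sign t).2 _ (Hbe t); rewrite kt; lra.
lra.
Qed.

Lemma bigcup_msum_choice (I : Type) (P : set I)
    (Dl Du : I -> set (X -> R)) n (e : 'I_n -> X -> R) :
  (forall t, (\bigcup_(k in P) msum (Dl k) (Du k)) (e t)) ->
  exists (kk : 'I_n -> I) (al be : 'I_n -> X -> R),
  [/\ forall t, P (kk t), forall t, Dl (kk t) (al t), forall t, Du (kk t) (be t) &
      forall t, e t = fun v => al t v + be t v].
Proof.
move=> He.
have /fin_all_exists [w Hw] : forall t, exists w : I * ((X -> R) * (X -> R)),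
    [/\ P w.1, Dl w.1 w.2.1, Du w.1 w.2.2 & e t = fun v => w.2.1 v + w.2.2 v].
  by move=> t; have [k Pk [a [b [Aa Bb E]]]] := He t; exists (k, (a, b)).
exists (fun t => (w t).1), (fun t => (w t).2.1), (fun t => (w t).2.2).
by split => t; case: (Hw t).
Qed.

Lemma avg_selection (I : finType) (J : set I)
    (C : I -> set (X -> R)) n (c : 'I_n -> R) (jj : 'I_n -> I) (g : 'I_n -> X -> R) :
  (forall j, J j -> convex_set_fun (C j) /\ C j !=set0) -> (forall t, 0 <= c t) ->
  (forall t, J (jj t)) -> (forall t, C (jj t) (g t)) ->
  exists zs : I -> X -> R, (forall j, J j -> C j (zs j)) /\
    forall v, \sum_t c t * g t v = \sum_t c t * zs (jj t) v.
Proof.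
move=> HC c0 Jjj Cg.
have /fin_all_exists [zs Hzs] : forall j, exists z : X -> R, (J j -> C j z) /\
    forall v, \sum_(t | jj t == j) c t * g t v = \sum_(t | jj t == j) c t * z v.
  move=> j; have [cz|cpos] := eqVneq (\sum_(t | jj t == j) c t) 0.
    have sum0 (F : 'I_n -> R) : \sum_(t | jj t == j) c t * F t = 0.
      by apply: big1 => t /(psumr_eq0P (fun t _ => c0 t) cz) ->; rewrite mul0r.
    have [Jj|nJj] := pselect (J j).
      by have [_ [z Cz]] := HC j Jj; exists z; split => // v; rewrite !sum0.
    by exists (fun _ => 0); split => [/nJj|v] //; rewrite !sum0.
  have [t1 /eqP jt1] : exists t1, jj t1 == j.
    apply: contrapT => nt; move/eqP: cpos; apply; apply: big_pred0 => t.
    by apply/negP => jt; apply: nt; exists t.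
  have Jj : J j by rewrite -jt1.
  have Cj t : jj t == j -> C j (g t) by move=> /eqP <-.
  have wpos : 0 < \sum_(t | jj t == j) c t by rewrite lt_def cpos sumr_ge0.
  have [z Cz Hz] := convex_weighted_avg (HC j Jj).1 c0 wpos Cj.
  by exists z; split => // v; rewrite -Hz mulr_suml.
exists zs; split => [j Jj|v]; first exact: (Hzs j).1.
exact: (@sum_regroup I n jj c (fun t => g t v) (fun j => zs j v) (fun j => (Hzs j).2 v)).
Qed.


End SupportAndAverages.

Section QuasidiffPair.
Variables (R : realType) (X : normedModType R).

Definition qd_pair (A B : set (X -> R)) :=
  [/\ A `<=` @in_dual R X /\ B `<=` @in_dual R X,
      convex_set_fun A /\ convex_set_fun B,
      @compact {ptws X -> R} A /\ @compact {ptws X -> R} B &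
      A !=set0 /\ B !=set0].

Lemma is_quasidiff_pair (f : X -> R) (x : X) (A B : set (X -> R)) :
  is_quasidiff f x A B -> qd_pair A B.
Proof.
case=> dAB cAB kAB H; have [_ [_ [a [b [[[p Ap _] _] [[q Bq _] _] _]]]]] := H 0.
by split => //; split; [exists p | exists q].
Qed.

End QuasidiffPair.

Section Proposition2.
Variables (R : realType) (X : normedModType R) (m l : nat).
Variables (Dlf Duf : 'I_m -> set (X -> R)) (Dlg Dug : 'I_l -> set (X -> R)).
Variable Jact : set 'I_l.
Hypothesis Hf : forall i, qd_pair (Dlf i) (Duf i).
Hypothesis Hg : forall j, Jact j -> qd_pair (Dlg j) (Dug j).

Local Notation qf := (qsum_f Dlf Duf).
Local Notation qg := (qsum_g Dlg Dug).
Local Notation spanA := (span_A Dlf Duf).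
Local Notation spanB := (span_B Dlf Duf).
Local Notation condA := (condA Dlf Duf).
Local Notation condB := (condB Dlf Duf Dlg Dug Jact).
Local Notation condQ_all := (condQ_all Dlf Duf Dlg Dug Jact).

Let dlf i : Dlf i `<=` @in_dual R X. Proof. by case: (Hf i) => [[]]. Qed.
Let duf i : Duf i `<=` @in_dual R X. Proof. by case: (Hf i) => [[]]. Qed.
Let vlf i : convex_set_fun (Dlf i). Proof. by case: (Hf i) => _ []. Qed.
Let vuf i : convex_set_fun (Duf i). Proof. by case: (Hf i) => _ []. Qed.
Let clf i : @compact {ptws X -> R} (Dlf i). Proof. by case: (Hf i) => _ _ []. Qed.
Let cuf i : @compact {ptws X -> R} (Duf i). Proof. by case: (Hf i) => _ _ []. Qed.
Let nlf i : Dlf i !=set0. Proof. by case: (Hf i) => _ _ _ []. Qed.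
Let nuf i : Duf i !=set0. Proof. by case: (Hf i) => _ _ _ []. Qed.

Lemma qsum_f_dual i : qf i `<=` @in_dual R X.
Proof. exact: msum_dual. Qed.

Lemma qsum_g_dual j : Jact j -> qg j `<=` @in_dual R X.
Proof. by move=> Jj; have [[dl du] _ _ _] := Hg Jj; exact: msum_dual. Qed.

Lemma qsum_f_sub_span_A i k : k != i -> qf k `<=` spanA i.
Proof. by move=> ki p qp; apply: lin_sub; exists k. Qed.

Lemma qsum_f_sub_span_B i : qf i `<=` spanB.
Proof. by move=> p qp; apply: lin_sub; exists i. Qed.

Lemma span_A_linear i : spanA i `<=` @linear_fun R X.
Proof. by apply: lin_linear => p [k _ qp]; exact: dual_linear (qsum_f_dual qp). Qed.

Lemma span_B_linear : spanB `<=` @linear_fun R X.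
Proof. by apply: lin_linear => p [k _ qp]; exact: dual_linear (qsum_f_dual qp). Qed.

Lemma supp_le0_of_qsum_vanish k (x y : X -> R) v :
  (forall p, qf k p -> p v = 0) ->
  Dlf k x -> Duf k y ->
  (supp (mtrans (Dlf k) y) v <= 0)%E /\ (supp (mneg_trans x (Duf k)) v <= 0)%E.
Proof.
move=> qv xk yk; split; apply: supp_le => p.
  by move=> [a Aa ->]; rewrite (qv (fun w => a w + y w)) //; exists a, y.
move=> [b Bb ->] /=.
have : x v + b v = 0 by apply: (qv (fun w => x w + b w)); exists x, b.
lra.
Qed.

Lemma mtrans_lower_sub i y : Duf i y -> mtrans (Dlf i) y `<=` qf i.
Proof. by move=> yi p [a Aa ->]; exists a, y. Qed.

Lemma mtrans_upper_sub i x : Dlf i x -> mtrans (Duf i) x `<=` qf i.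
Proof. by move=> xi p [b Bb ->]; exists x, b; split => //; apply: funext => v; rewrite addrC. Qed.

Lemma span_A_separation i (K : set (X -> R)) : condA ->
  K `<=` qf i -> @compact {ptws X -> R} K -> convex_set_fun K ->
  exists v, (forall k, K k -> k v <= -1) /\ (forall q, spanA i q -> q v = 0).
Proof.
move=> HA Kq cK vK.
have Kd k : K k -> in_dual k by move=> Kk; exact: qsum_f_dual (Kq _ Kk).
have KA k : K k -> ~ @closure {ptws X -> R} (spanA i) k.
  move=> Kk Ak; rewrite -[False]/(set0 k) -(HA i).
  by split; [exact: Kq | split => //; exact: Kd].
exact: (wstar_separation cK vK (fun k Kk => dual_linear (Kd k Kk)) (lin0 _)
  (@lin_lincomb_closed _ _ _) (@span_A_linear i) KA).
Qed.

Lemma condB_separation (zs : 'I_l -> X -> R) : condB ->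
  (forall j, Jact j -> Dug j (zs j)) ->
  exists v0, (forall j, Jact j -> (supp (mtrans (Dlg j) (zs j)) v0 < 0)%E) /\
    (forall q, spanB q -> q v0 = 0).
Proof.
move=> HB Hzs.
have HC j : Jact j -> [/\ @compact {ptws X -> R} (mtrans (Dlg j) (zs j)),
    convex_set_fun (mtrans (Dlg j) (zs j)), mtrans (Dlg j) (zs j) `<=` @in_dual R X
    & mtrans (Dlg j) (zs j) !=set0].
  move=> Jj; have [[dl du] [vl _] [cl _] [[a Aa] _]] := Hg Jj.
  split; [exact: mtrans_compact | exact: mtrans_convex | |by exists (fun v => a v + zs j v), a].
  exact: mtrans_dual dl (du _ (Hzs j Jj)).
have coB : co (\bigcup_(j in Jact) mtrans (Dlg j) (zs j)) `&` wstar_closure spanB = set0.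
  rewrite -subset0 => p [cp Bp]; rewrite -HB; split => //.
  apply: co_subset cp => _ [j Jj [a Aa ->]]; exists j => //.
  by exists a, (zs j); split => //; exact: Hzs.
have [v0 [Kv Bv]] := hull_separation HC (lin0 _) (@lin_lincomb_closed _ _ _) span_B_linear coB.
exists v0; split => // j Jj.
by apply: le_lt_trans (supp_le (Kv j ^~ Jj)) _; rewrite lte_fin ltrN10.
Qed.

Lemma condQ_all_of_condAB : condA -> condB -> condQ_all.
Proof.
move=> HA HB xs ys zs Hxs Hys Hzs.
have lt_m1 : ((-1 : R)%:E < 0)%E by rewrite lte_fin ltrN10.
have off_i i v k : k != i -> (forall q, spanA i q -> q v = 0) ->
    (supp (mtrans (Dlf k) (ys k)) v <= 0)%E /\ (supp (mneg_trans (xs k) (Duf k)) v <= 0)%E.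
  move=> ki Av; apply: supp_le0_of_qsum_vanish (Hxs k) (Hys k) => p qp.
  exact/Av/(qsum_f_sub_span_A ki).
split.
- move=> i.
  have [v [Kv Av]] := span_A_separation HA (mtrans_lower_sub (Hys i))
    (mtrans_compact (y := ys i) (@clf i)) (mtrans_convex (y := ys i) (@vlf i)).
  by exists v; split => [|k ki]; [exact: le_lt_trans (supp_le Kv) lt_m1 | exact: off_i ki Av].
- move=> i.
  have [v [Kv Av]] := span_A_separation HA (mtrans_upper_sub (Hxs i))
    (mtrans_compact (y := xs i) (@cuf i)) (mtrans_convex (y := xs i) (@vuf i)).
  exists (- v); split => [|k ki].
    apply: le_lt_trans _ lt_m1; apply: supp_le => _ [b Bb ->] /=.
    have := Kv _ (ex_intro2 _ _ b Bb erefl).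
    rewrite (linear_funN _ (dual_linear (dlf (Hxs i)))) (linear_funN _ (dual_linear (duf Bb))).
    by rewrite /=; lra.
  have Av' q : spanA i q -> q (- v) = 0.
    by move=> Aq; rewrite linear_funN ?(Av q Aq) ?oppr0 //; exact: span_A_linear Aq.
  by have [h1 h2] := off_i i (- v) k ki Av'.
- have [v0 [Kv Bv]] := condB_separation HB Hzs.
  exists v0; split => // i; apply: supp_le0_of_qsum_vanish (Hxs i) (Hys i) => p qp.
  exact/Bv/(qsum_f_sub_span_B qp).
Qed.

Lemma upper_g_selection : exists zs : 'I_l -> X -> R, forall j, Jact j -> Dug j (zs j).
Proof.
have /fin_all_exists [zs Hzs] j : exists z : X -> R, Jact j -> Dug j z.
  have [Jj|nJj] := pselect (Jact j); last by exists (fun _ => 0).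
  by have [_ _ _ [_ [z Dz]]] := Hg Jj; exists z.
by exists zs.
Qed.

Lemma condA_of_condQ_all : (forall i, wstar_closure (spanA i) = spanA i) ->
  condQ_all -> condA.
Proof.
move=> Acl HQ i; rewrite Acl -subset0 => _ [[a [b [Aa Bb ->]]] [n [c [e [He abE]]]]].
have [kk [al [be [ki Hal Hbe eE]]]] := bigcup_msum_choice He.
have [xs [ys [Hxs Hys vanish]]] := avg_representatives vlf vuf nlf nuf Hal Hbe.
pose xs' k := if k == i then a else xs k.
pose ys' k := if k == i then b else ys k.
have Hxs' k : Dlf k (xs' k) by rewrite /xs'; case: eqP => [->|].
have Hys' k : Duf k (ys' k) by rewrite /ys'; case: eqP => [->|].
have [zs Hzs] := upper_g_selection.
have [Q1 _ _] := HQ xs' ys' zs Hxs' Hys' Hzs.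
have [v [Hvi Hvk]] := Q1 i.
have : a v + b v < 0.
  by apply: (supp_lt0_pt (p := fun w => a w + b w) Hvi); exists a => //; rewrite /ys' eqxx.
have -> : a v + b v = \sum_t c t * e t v by have := congr1 (fun f => f v) abE.
rewrite big1 ?ltxx // => t _; rewrite eE vanish ?mulr0 // => t'.
by have := Hvk _ (ki t'); rewrite /xs' /ys' (negbTE (ki t')).
Qed.

Lemma condB_of_condQ_all : wstar_closure spanB = spanB -> condQ_all -> condB.
Proof.
move=> Bcl HQ; rewrite /condB Bcl -subset0 => p [[n [c [e [He c0 c1 pE]]]] Bp].
have [jj [al [be [Jjj Hal Hbe eE]]]] := bigcup_msum_choice He.
have [n' [d [e' [He' pE']]]] := Bp.
have [kk [al' [be' [_ Hal' Hbe' eE']]]] := bigcup_msum_choice He'.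
have [xs [ys [Hxs Hys vanish]]] := avg_representatives vlf vuf nlf nuf Hal' Hbe'.
have HCu j : Jact j -> convex_set_fun (Dug j) /\ Dug j !=set0.
  by move=> Jj; have [_ [_ vu] _ [_ nu]] := Hg Jj.
have [zs [Hzs beE]] := avg_selection HCu c0 Jjj Hbe.
have [_ _ [v0 [Hg0 Hf0]]] := HQ xs ys zs Hxs Hys Hzs.
have : p v0 = 0.
  by rewrite pE'; apply: big1 => s _; rewrite eE' vanish ?mulr0.
have : p v0 < 0.
  have -> : p v0 = \sum_t c t * (al t v0 + zs (jj t) v0).
    rewrite pE; under eq_bigr do rewrite eE mulrDr.
    by rewrite big_split beE -big_split; apply: eq_bigr => t _; rewrite mulrDr.
  apply: convex_comb_lt0 => // t.
  by apply: (supp_lt0_pt (p := fun w => al t w + zs (jj t) w) (Hg0 _ (Jjj t))); exists (al t).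
lra.
Qed.

Lemma condAB_iff_MFCQ : (forall i, wstar_closure (spanA i) = spanA i) ->
  condA /\ condB <-> MFCQ_qd Dlf Duf Dlg Dug Jact.
Proof.
move=> Acl; split.
- move=> [HA HB]; split; first by move=> i; have := HA i; rewrite Acl.
  have HC j : Jact j -> [/\ @compact {ptws X -> R} (qg j), convex_set_fun (qg j),
      qg j `<=` @in_dual R X & qg j !=set0].
    move=> Jj; have [_ [vl vu] [cl cu] [[a Aa] [b Bb]]] := Hg Jj.
    split; [exact: msum_compact | exact: msum_convex | exact: qsum_g_dual |].
    by exists (fun v => a v + b v), a, b.
  have [v0 [Gv Bv]] := hull_separation HC (lin0 _) (@lin_lincomb_closed _ _ _) span_B_linear HB.
  exists v0; split => [i p qp|j p Jj qp]; first exact/Bv/(qsum_f_sub_span_B qp).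
  by have := Gv j p Jj qp; lra.
- move=> [SLI [v0 [Hf0 Hg0]]]; split; first by move=> i; rewrite Acl; exact: SLI.
  rewrite /condB -subset0 => p [[n [c [e [He c0 c1 pE]]]] [Bp _]].
  have : p v0 = 0.
    have Bv0 : spanB `<=` [set q | q v0 = 0].
      by move=> q; apply: lin_vanish => r [i _ qr]; exact: Hf0 qr.
    have := @closureS {ptws X -> R} _ _ Bv0 p Bp.
    by rewrite -(proj1 (closure_id _) (@ptws_closed_ker R X v0)).
  have : p v0 < 0.
    by rewrite pE; apply: convex_comb_lt0 => // t; have [j Jj qp] := He t; exact: Hg0 qp.
  lra.
Qed.

End Proposition2.

Theorem proposition2 (R : realType) (X : completeNormedModType R) (m l : nat)
  (f : 'I_m -> X -> R) (g : 'I_l -> X -> R)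
  (Dlf Duf : 'I_m -> set (X -> R)) (Dlg Dug : 'I_l -> set (X -> R))
  (xbar : X) :
  let M := [set x : X | (forall i, f i x = 0) /\ (forall j, g j x <= 0)] in
  let Jact := [set j : 'I_l | g j xbar = 0] in
  M xbar ->
  (forall i, is_quasidiff (f i) xbar (Dlf i) (Duf i)) ->
  (forall j, Jact j -> is_quasidiff (g j) xbar (Dlg j) (Dug j)) ->
  [/\ (condA Dlf Duf -> condB Dlf Duf Dlg Dug Jact ->
         condQ_all Dlf Duf Dlg Dug Jact),
      ((forall i, wstar_closure (span_A Dlf Duf i) = span_A Dlf Duf i) ->
       wstar_closure (span_B Dlf Duf) = span_B Dlf Duf ->
       condQ_all Dlf Duf Dlg Dug Jact ->
       condA Dlf Duf /\ condB Dlf Duf Dlg Dug Jact) &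
      ((forall i, wstar_closure (span_A Dlf Duf i) = span_A Dlf Duf i) ->
       (condA Dlf Duf /\ condB Dlf Duf Dlg Dug Jact <->
        MFCQ_qd Dlf Duf Dlg Dug Jact))].
Proof.
move=> M Jact _ qdf qdg.
have Hf i := is_quasidiff_pair (qdf i).
have Hg j (Jj : Jact j) := is_quasidiff_pair (qdg j Jj).
split.
- exact: condQ_all_of_condAB Hf Hg.
- move=> Acl Bcl HQ; split; first exact: condA_of_condQ_all Hf Hg Acl HQ.
  exact: condB_of_condQ_all Hf Hg Bcl HQ.
- exact: condAB_iff_MFCQ Hf Hg.
Qed.
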